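(* Let $i,j,\ell$ be integers with $1\le i\le j\le\ell$. Suppose $\mathcal F\subset\binom{[n]}{\ell}$ is intersecting and $\tau(\mathcal F)\geq j$. Then $\Delta_i(\mathcal F)\leq \ell^{j-i}\Delta_j(\mathcal F)$.
   Context: A family is intersecting if any two members intersect. $\tau(\mathcal F)$ is the minimum size of a set meeting all members of $\mathcal F$. For $S\subset[n]$, $\mathcal F(S)=\{F\setminus S: S\subset F\in\mathcal F\}$, and $\Delta_i(\mathcal F)=\max_{S\in\binom{[n]}{i}}|\mathcal F(S)|$. *)

From mathcomp Require Import all_boot all_order.
Set Implicit Arguments. Unset Strict Implicit. Unset Printing Implicit Defensive.

Definition intersecting n (F : {set {set 'I_n}}) : Prop :=
  forall A B, A \in F -> B \in F -> A :&: B != set0.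

Definition uniform n (F : {set {set 'I_n}}) (l : nat) : Prop :=
  forall A, A \in F -> #|A| = l.

Definition transversal n (F : {set {set 'I_n}}) (T : {set 'I_n}) : bool :=
  [forall A in F, A :&: T != set0].

Definition tau n (F : {set {set 'I_n}}) : nat :=
  \big[minn/n]_(T : {set 'I_n} | transversal F T) #|T|.

Definition link n (F : {set {set 'I_n}}) (S : {set 'I_n}) : {set {set 'I_n}} :=
  [set A :\: S | A in [set A in F | S \subset A]].

Definition Delta n (i : nat) (F : {set {set 'I_n}}) : nat :=
  \max_(S : {set 'I_n} | #|S| == i) #|link F S|.

From Pilot Require Import Defs.
From mathcomp Require Import all_boot all_order.
Import Order.TTheory.

Set Implicit Arguments.
Unset Strict Implicit.
Unset Printing Implicit Defensive.

(* If S is an i-set with i < tau F, some A in F misses S. Every member of F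
   containing S meets A, hence contains x |: S for some x in A; so
   #|F(S)| <= sum_(x in A) #|F(x |: S)| <= l * Delta_(i+1) F.
   Iterating from i up to j gives the factor l^(j-i). *)

Lemma leq_card_bigcup (T I : finType) (P : pred I) (G : I -> {set T}) :
  #|\bigcup_(x | P x) G x| <= \sum_(x | P x) #|G x|.
Proof.
elim/big_rec2: _ => [|x U s _ IH]; first by rewrite cards0.
exact: leq_trans (leq_card_setU _ _).1 (leq_add (leqnn _) IH).
Qed.

Section Families.

Variable n : nat.
Implicit Types (F : {set {set 'I_n}}) (S T : {set 'I_n}).

Lemma tau_le F T : Defs.transversal F T -> tau F <= #|T|.
Proof.
move=> FT; rewrite /tau -Order.NatOrder.minEnat.
exact: (bigmin_le_cond _ (fun T : {set 'I_n} => #|T|) FT).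
Qed.

Lemma card_link F S : #|link F S| = #|[set A in F | S \subset A]|.
Proof.
apply: card_in_imset => A B; rewrite !inE => /andP[_ sSA] /andP[_ sSB] eqAB.
by rewrite -(setID A S) -(setID B S) eqAB (setIidPr sSA) (setIidPr sSB).
Qed.

Lemma card_link_le_Delta F S : #|link F S| <= Delta #|S| F.
Proof. exact: (leq_bigmax_cond (F := fun T => #|link F T|)). Qed.

Lemma card_link_le_sum F S A :
    intersecting F -> A \in F -> A :&: S = set0 ->
  #|link F S| <= \sum_(x in A) #|link F (x |: S)|.
Proof.
move=> interF FA disjAS.
have cover_SB : [set B in F | S \subset B] \subset
                \bigcup_(x in A) [set B in F | x |: S \subset B].
  apply/subsetP => B; rewrite inE => /andP[FB sSB].
  have /set0Pn[x] := interF _ _ FB FA; rewrite inE => /andP[xB xA].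
  by apply/bigcupP; exists x; rewrite // inE FB subUset sub1set xB.
under eq_bigr do rewrite card_link.
by rewrite card_link (leq_trans (subset_leq_card cover_SB)) ?leq_card_bigcup.
Qed.

Lemma Delta_le_mul_DeltaS F l k :
  uniform F l -> intersecting F -> k < tau F -> Delta k F <= l * Delta k.+1 F.
Proof.
move=> unifF interF lt_k_tau; apply/bigmax_leqP => S /eqP cardS.
have /forallPn[A] : ~~ Defs.transversal F S.
  by apply: contraTN lt_k_tau => /tau_le; rewrite -leqNgt cardS.
rewrite negb_imply negbK => /andP[FA /eqP disjAS].
apply: leq_trans (card_link_le_sum interF FA disjAS) _.
rewrite -(unifF _ FA) -sum1_card big_distrl /= leq_sum // => x xA.
have xNS : x \notin S.
  by apply: contra_eqN disjAS => xS; apply/set0Pn; exists x; rewrite inE xA.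
by rewrite mul1n -cardS; have := card_link_le_Delta F (x |: S); rewrite cardsU1 xNS.
Qed.

Lemma Delta_le_exp_mul_Delta F l k d :
    uniform F l -> intersecting F -> k + d <= tau F ->
  Delta k F <= l ^ d * Delta (k + d) F.
Proof.
move=> unifF interF; elim: d => [|d IH] le_kd_tau; first by rewrite addn0 mul1n.
have lt_kd_tau : k + d < tau F by rewrite addnS in le_kd_tau.
apply: leq_trans (IH (ltnW lt_kd_tau)) _.
by rewrite expnSr -mulnA leq_mul2l addnS Delta_le_mul_DeltaS ?orbT.
Qed.

End Families.

Theorem proposition5p2 (n i j l : nat) (F : {set {set 'I_n}}) :
  1 <= i -> i <= j -> j <= l ->
  uniform F l -> intersecting F -> j <= tau F ->
  Delta i F <= l ^ (j - i) * Delta j F.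
Proof.
move=> _ le_ij _ unifF interF le_j_tau.
have le_tau : i + (j - i) <= tau F by rewrite subnKC.
by have := Delta_le_exp_mul_Delta unifF interF le_tau; rewrite subnKC.
Qed.
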